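(* Let $k\ge 0$ be an integer and let $G$ be a graph with $m$ edges, where $m\ge\max\{\tfrac{1}{2}k^2+6k+3,\,7k+25\}$. If $q(G)\ge m-k+1$, then $G$ contains $K_{1,m-k}$ as a subgraph.
   Context: All graphs are finite, simple and undirected. $q(G)$ denotes the signless Laplacian spectral radius of $G$, i.e. the largest eigenvalue of $Q(G)=D(G)+A(G)$, where $A(G)$ is the adjacency matrix and $D(G)$ the diagonal matrix of vertex degrees. $K_{1,t}$ denotes the star with $t$ edges (on $t+1$ vertices). *)

From HB Require Import structures.
From mathcomp Require Import all_boot all_order all_algebra.
From mathcomp Require Import polyrcf.
Set Implicit Arguments. Unset Strict Implicit. Unset Printing Implicit Defensive.
Import Order.TTheory GRing.Theory Num.Theory.
Local Open Scope ring_scope.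

(* A finite simple graph on vertex set 'I_n is a symmetric irreflexive
   relation e : rel 'I_n (checked as hypotheses in the theorem). *)

Definition nedges (n : nat) (e : rel 'I_n) : nat :=
  #|[set p : 'I_n * 'I_n | (p.1 < p.2)%N && e p.1 p.2]|.

Definition deg (n : nat) (e : rel 'I_n) (v : 'I_n) : nat :=
  #|[set u : 'I_n | e v u]|.

Definition adjmx (R : nzRingType) (n : nat) (e : rel 'I_n) : 'M[R]_n :=
  \matrix_(i, j) (e i j)%:R.
Definition degmx (R : nzRingType) (n : nat) (e : rel 'I_n) : 'M[R]_n :=
  \matrix_(i, j) ((i == j)%:R * (deg e i)%:R).
Definition signlessQ (R : nzRingType) (n : nat) (e : rel 'I_n) : 'M[R]_n :=
  degmx R e + adjmx R e.

(* signless Laplacian spectral radius: the largest eigenvalue of Q(G),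
   i.e. the largest real root of its characteristic polynomial
   (Q is real symmetric, so all its eigenvalues are real; they are also
   >= 0, so the default 0 for the empty graph is harmless). *)
Definition qrad (R : rcfType) (n : nat) (e : rel 'I_n) : R :=
  \big[Num.max/0]_(x <- rootsR (char_poly (signlessQ R e))) x.

Definition has_star (n : nat) (e : rel 'I_n) (t : nat) : Prop :=
  exists (c : 'I_n) (f : 'I_t -> 'I_n), injective f /\ forall i, e c (f i).

From HB Require Import structures.
From mathcomp Require Import all_boot all_order all_algebra.
From mathcomp Require Import polyrcf.
From mathcomp Require Import zify lra.
Import Order.TTheory GRing.Theory Num.Theory.
Set Implicit Arguments. Unset Strict Implicit. Unset Printing Implicit Defensive.
Local Open Scope ring_scope.

(* Let x be an eigenvector of Q(G) for an eigenvalue q >= m - k + 1 and let j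
   maximise |x_j| / d_j.  The eigen-equation at j, (q - d_j) x_j = sum_{w ~ j} x_w,
   then gives q d_j <= d_j^2 + sum_{w ~ j} d_w.  If every degree were below m - k,
   this neighbour degree sum would be at most d_j (m - k - 1) and at most
   2m - d_j, and at most m + 1 when d_j = 2 (the degrees of two vertices sum
   to at most m + 1); each case contradicts the bound on q as soon as m >= 3k + 4. *)

Section Darts.
Variables (n : nat) (e : rel 'I_n).
Hypotheses (e_sym : symmetric e) (e_irr : irreflexive e).

Definition darts := [set p : 'I_n * 'I_n | e p.1 p.2].
Definition nbhd (u : 'I_n) := [set w | e u w].

Lemma card_darts : #|darts| = (2 * nedges e)%N.
Proof.
pose A := [set p : 'I_n * 'I_n | (p.1 < p.2)%N && e p.1 p.2].
have swap_preim : swap_pair @: A = swap_pair @^-1: A.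
  exact: can2_imset_pre swap_pairK swap_pairK.
have darts_split : darts = A :|: swap_pair @: A.
  apply/setP => -[a b]; rewrite swap_preim !inE /= (e_sym b a).
  by case: ltngtP => [||ab]; rewrite ?orbF // (val_inj ab) e_irr.
have A_swap_disj : A :&: swap_pair @: A = set0.
  by apply/setP => -[a b]; rewrite swap_preim !inE /=; case: ltngtP; rewrite ?andbF.
have := cardsUI A (swap_pair @: A).
by rewrite -darts_split A_swap_disj cards0 addn0 (card_imset _ (can_inj swap_pairK)) addnn -mul2n.
Qed.

Lemma deg_darts w : deg e w = #|[set p in darts | p.1 == w]|.
Proof.
have -> : [set p in darts | p.1 == w] = pair w @: nbhd w.
  apply/setP => -[a b]; rewrite !inE /=; apply/andP/imsetP => [[eab /eqP <-]|[c]].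
    by exists b; rewrite ?inE.
  by rewrite inE => ewc [-> ->].
by rewrite card_imset // => u v [].
Qed.

Lemma sum_deg (W : {set 'I_n}) :
  (\sum_(w in W) deg e w)%N = #|[set p in darts | p.1 \in W]|.
Proof.
rewrite -sum1_card (partition_big fst (mem W)) /=; last by move=> p; rewrite inE => /andP[].
apply: eq_bigr => w wW; rewrite deg_darts -sum1_card; apply: eq_bigl => p.
by rewrite !inE; case: eqP => [->|]; rewrite ?wW ?andbT ?andbF.
Qed.

Lemma card_darts_snd (W : {set 'I_n}) :
  #|[set p in darts | p.2 \in W]| = #|[set p in darts | p.1 \in W]|.
Proof.
rewrite -(card_imset _ (can_inj swap_pairK)) (can2_imset_pre _ swap_pairK swap_pairK).
by apply: eq_card => -[a b]; rewrite !inE /= e_sym.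
Qed.

Lemma sum_deg_nbhd_le u : (\sum_(w in nbhd u) deg e w + deg e u <= 2 * nedges e)%N.
Proof.
have u_nbhd : u \notin nbhd u by rewrite inE e_irr.
rewrite -card_darts addnC -(big_setU1 _ u_nbhd) sum_deg.
by apply/subset_leq_card/subsetP => p; rewrite inE => /andP[].
Qed.

Lemma sum_deg_nbhd_deg2 u :
  deg e u = 2 -> (\sum_(w in nbhd u) deg e w <= nedges e + 1)%N.
Proof.
move=> /eqP/cards2P[w1 [w2 [_ nbhd_u]]].
pose A1 := [set p in darts | p.1 \in nbhd u].
pose A2 := [set p in darts | p.2 \in nbhd u].
have A12_sub : (#|A1 :|: A2| <= 2 * nedges e)%N.
  by rewrite -card_darts; apply/subset_leq_card/subsetP => p; rewrite !inE => /orP[]/andP[].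
have A12_meet : (#|A1 :&: A2| <= 2)%N.
  apply: (@leq_trans #|[set (w1, w2); (w2, w1)]|); last by rewrite cards2; case: eqP.
  apply/subset_leq_card/subsetP => -[a b]; rewrite /A1 /A2 /nbhd nbhd_u !inE /=.
  case/andP=> /andP[eab /orP[]/eqP ea] /andP[_ /orP[]/eqP eb]; subst a b;
    by rewrite ?eqxx ?orbT //; rewrite e_irr in eab.
have card_A1 : #|A1| = (\sum_(w in nbhd u) deg e w)%N by rewrite sum_deg.
have card_A2 : #|A2| = #|A1| by rewrite card_darts_snd.
have := cardsUI A1 A2; lia.
Qed.

End Darts.

Section SignlessEigenvalue.
Variables (R : realFieldType) (n : nat) (e : rel 'I_n).
Hypothesis e_sym : symmetric e.

Lemma signlessQ_eigenE (v : 'rV[R]_n) (l : R) j :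
  v *m signlessQ R e = l *: v ->
  l * v 0 j = (deg e j)%:R * v 0 j + \sum_(i in nbhd e j) v 0 i.
Proof.
move=> /(congr1 (fun M : 'rV[R]_n => M 0 j)); rewrite !mxE => <-.
under eq_bigr do rewrite !mxE mulrDr.
rewrite big_split /= (bigD1 j) //= eqxx mul1r big1 ?addr0; last first.
  by move=> i /negbTE ->; rewrite mul0r mulr0.
rewrite mulrC; congr (_ + _); rewrite [RHS]big_mkcond /=; apply: eq_bigr => i _.
by rewrite inE (e_sym i); case: (e j i); rewrite ?mulr1 ?mulr0.
Qed.

Lemma eigenvalue_signlessQ_le (l : R) :
  0 < l -> eigenvalue (signlessQ R e) l ->
  exists2 j, (0 < deg e j)%N &
    l * (deg e j)%:R <= (deg e j)%:R ^+ 2 + (\sum_(w in nbhd e j) deg e w)%:R.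
Proof.
move=> l_gt0 /eigenvalueP[v v_eig v_neq0]; pose x i := v 0 i.
have eigE := signlessQ_eigenE _ v_eig.
have deg_gt0 i : x i != 0 -> (0 < deg e i)%N.
  apply: contraR; rewrite -eqn0Ngt => /eqP deg0.
  have nbhd0 : nbhd e i = set0 by apply: cards0_eq.
  by have := eigE i; rewrite deg0 nbhd0 big_set0 mul0r addr0 => /eqP; rewrite mulf_eq0 gt_eqF.
have [i0 x_i0] : exists i0, x i0 != 0.
  apply/existsP; apply: contraR v_neq0; rewrite negb_exists => /forallP x0.
  by apply/eqP/rowP => i; rewrite mxE; apply/eqP/negbNE/x0.
pose r i := `|x i| / (deg e i)%:R.
have [j _ r_max] := @arg_maxP _ R 'I_n i0 xpredT r isT.
have r_j_gt0 : 0 < r j.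
  by apply: lt_le_trans (r_max i0 isT); rewrite divr_gt0 ?normr_gt0 ?ltr0n ?deg_gt0.
have x_j : x j != 0 by apply: contraTneq r_j_gt0 => x_j0; rewrite /r x_j0 normr0 mul0r ltxx.
exists j; first exact: deg_gt0.
set d := (deg e j)%:R; set S := (\sum_(w in nbhd e j) deg e w)%N.
have d_gt0 : 0 < d by rewrite ltr0n deg_gt0.
have x_jE : `|x j| = r j * d by rewrite /r divfK ?gt_eqF.
have dist_bound : `|l - d| * `|x j| <= r j * S%:R.
  rewrite -normrM mulrBl eigE addrAC subrr add0r.
  apply: le_trans (ler_norm_sum _ _ _) _.
  rewrite natr_sum mulr_sumr; apply: ler_sum => i; rewrite inE => e_ji.
  have deg_i_gt0 : (0 < deg e i)%N by rewrite card_gt0; apply/set0Pn; exists j; rewrite inE e_sym.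
  by rewrite -ler_pdivrMr ?ltr0n //; apply: r_max.
have : (l - d) * d <= S%:R.
  rewrite -(ler_pM2l r_j_gt0); apply: le_trans dist_bound.
  by rewrite x_jE mulrCA ler_pM2r ?(mulr_gt0 r_j_gt0 d_gt0) // ler_norm.
by rewrite expr2; lra.
Qed.

End SignlessEigenvalue.

Lemma eigenvalue_ge_of_le_qrad (R : rcfType) n (e : rel 'I_n) (c : R) :
  0 < c -> c <= qrad R e -> exists2 l, eigenvalue (signlessQ R e) l & c <= l.
Proof.
move=> c_gt0 c_le_q.
have charQ_neq0 : char_poly (signlessQ R e) != 0 by rewrite monic_neq0 ?char_poly_monic.
have /hasP[l l_root c_le_l] : has (>= c) (rootsR (char_poly (signlessQ R e))).
  apply: contraLR c_le_q => /hasPn l_lt_c; rewrite -ltNge.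
  by rewrite /qrad big_seq; apply: bigmax_lt => // l /l_lt_c; rewrite ltNge.
exists l => //; rewrite eigenvalue_root_char.
by have := roots_on_rootsR charQ_neq0 l; rewrite l_root => /andP[].
Qed.

Lemma has_star_of_deg n (e : rel 'I_n) c t : (t <= deg e c)%N -> has_star e t.
Proof.
move=> t_le; have size_nbhd : (t <= size (enum (nbhd e c)))%N by rewrite -cardE.
have i_lt_size (i : 'I_t) : (i < size (enum (nbhd e c)))%N := leq_trans (ltn_ord i) size_nbhd.
exists c, (fun i => nth c (enum (nbhd e c)) i); split.
  by move=> i j /eqP; rewrite nth_uniq ?enum_uniq ?i_lt_size // => /eqP/val_inj.
by move=> i; have := mem_nth c (i_lt_size i); rewrite mem_enum inE.
Qed.

Lemma degree_constraints_absurd (m k d S : nat) :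
  (3 * k + 4 <= m)%N -> (0 < d < m - k)%N ->
  (S <= d * (m - k).-1)%N -> (S + d <= 2 * m)%N -> (d = 2 -> S <= m + 1)%N ->
  ((m - k).+1 * d <= d ^ 2 + S)%N -> False.
Proof.
move=> m_ge /andP[d_gt0 d_lt] S_le_deg S_le_edges S_le_deg2 q_bound.
have [d_lt2|d_gt2|d2] := ltngtP d 2.
- have d1 : d = 1%N by lia.
  by subst d; lia.
- (* the quadratic d^2 - (m - k + 2) d + 2m is negative on [3, m - k - 1] *)
  have : (0 <= (d - 3) * (m - k - 1 - d))%N by [].
  nia.
- by move: (S_le_deg2 d2) q_bound; subst d; lia.
Qed.

Theorem theorem1p6 (R : rcfType) (n k : nat) (e : rel 'I_n) :
  symmetric e -> irreflexive e ->
  (k ^ 2 + 12 * k + 6 <= 2 * nedges e)%N ->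
  (7 * k + 25 <= nedges e)%N ->
  (nedges e)%:R - k%:R + 1 <= qrad R e ->
  has_star e (nedges e - k).
Proof.
move=> e_sym e_irr _ m_ge q_ge.
set m := nedges e in m_ge q_ge *.
rewrite -natrB ?natr1 in q_ge; last by lia.
have [l l_eig l_ge] := eigenvalue_ge_of_le_qrad (ltr0Sn R _) q_ge.
have l_gt0 : 0 < l by apply: lt_le_trans l_ge; rewrite ltr0Sn.
have [j deg_j_gt0 l_bound] := eigenvalue_signlessQ_le e_sym l_gt0 l_eig.
case: (pickP (fun c => m - k <= deg e c)%N) => [c /has_star_of_deg //|deg_small].
have deg_lt c : (deg e c < m - k)%N by rewrite ltnNge deg_small.
exfalso; apply: (@degree_constraints_absurd m k (deg e j) (\sum_(w in nbhd e j) deg e w)).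
- by lia.
- by rewrite deg_j_gt0 deg_lt.
- by rewrite -sum_nat_const; apply: leq_sum => w _; have := deg_lt w; lia.
- exact: sum_deg_nbhd_le.
- exact: sum_deg_nbhd_deg2.
- rewrite -(ler_nat R) natrD natrM natrX; apply: le_trans l_bound.
  by rewrite ler_pM2r ?ltr0n.
Qed.
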